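(* Let $r$ be a positive integer, let $G_r=(V,E)$ be the Chimera graph, and let $c_{uv}\in\mathbb{R}$ for $(u,v)\in E$ and $d_u\in\mathbb{R}$ for $u\in V$ be arbitrary. Let $H^*=\min_{S\in\{-1,1\}^V}\left(\sum_{(u,v)\in E}c_{uv}S_uS_v+\sum_{u\in V}d_uS_u\right)$. Then $$H^*\le -\frac{C}{3C+4}\left[\sum_{(u,v)\in E}|c_{uv}|+\sum_{u\in V}|d_u|\right]$$ for some constant $C>\frac{\ln(1+\sqrt{2})}{\pi}$ (independent of $r$ and of the coefficients). In particular, the approximation factor $(3C+4)/C$ satisfies $(3C+4)/C<17.26$.
   Context: The Chimera graph $G_r=(V,E)$: $V=\{(i,j,k,l)\in\mathbb{Z}^4: 1\le i,j\le r,\ 1\le k\le 4,\ l\in\{0,1\}\}$. $E=E_0\cup E_1\cup E_{01}$ (disjoint), where $E_0$ consists of the edges $\{(i,j,k,0),(i+1,j,k,0)\}$ for $1\le i\le r-1$, $1\le j\le r$, $1\le k\le 4$; $E_1$ consists of the edges $\{(i,j,k,1),(i,j+1,k,1)\}$ for $1\le i\le r$, $1\le j\le r-1$, $1\le k\le 4$; and $E_{01}$ consists of the edges $\{(i,j,k_0,0),(i,j,k_1,1)\}$ for $1\le i,j\le r$, $1\le k_0,k_1\le 4$. *)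

From Stdlib Require Import Reals.
From mathcomp Require Import all_boot all_order all_algebra.
From mathcomp Require Import Rstruct.
Set Implicit Arguments. Unset Strict Implicit. Unset Printing Implicit Defensive.
Import Order.TTheory GRing.Theory Num.Theory.

(* Vertices of the Chimera graph G_r: ((i, j, k), l) with i, j : 'I_r,
   k : 'I_4 (0-indexed versions of 1..r, 1..r, 1..4), l : bool
   (false = 0, true = 1). *)
Definition cvert (r : nat) : finType := ('I_r * 'I_r * 'I_4 * bool)%type.

Definition cv_i r (u : cvert r) : nat := u.1.1.1.
Definition cv_j r (u : cvert r) : nat := u.1.1.2.
Definition cv_k r (u : cvert r) : nat := u.1.2.
Definition cv_l r (u : cvert r) : bool := u.2.

(* Oriented edge relation: each undirected edge of E = E0 ∪ E1 ∪ E01 is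
   listed exactly once, as the ordered pair (u, v) below. *)
Definition chimera_edge r (u v : cvert r) : bool :=
  [|| [&& ~~ cv_l u, ~~ cv_l v, cv_i v == (cv_i u).+1,
          cv_j v == cv_j u & cv_k v == cv_k u]
    , [&& cv_l u, cv_l v, cv_i v == cv_i u,
          cv_j v == (cv_j u).+1 & cv_k v == cv_k u]
    | [&& ~~ cv_l u, cv_l v, cv_i v == cv_i u & cv_j v == cv_j u] ].

Local Open Scope ring_scope.

Definition spin (b : bool) : R := if b then 1 else -1.

Definition energy r (c : cvert r -> cvert r -> R) (d : cvert r -> R)
  (S : {ffun cvert r -> bool}) : R :=
  \sum_(e : cvert r * cvert r | chimera_edge e.1 e.2)
      c e.1 e.2 * spin (S e.1) * spin (S e.2)
  + \sum_(u : cvert r) d u * spin (S u).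

Definition Hstar r (c : cvert r -> cvert r -> R) (d : cvert r -> R) : R :=
  \big[Order.min/energy c d [ffun _ => true]]_(S : {ffun cvert r -> bool})
     energy c d S.

Definition coef_l1 r (c : cvert r -> cvert r -> R) (d : cvert r -> R) : R :=
  \sum_(e : cvert r * cvert r | chimera_edge e.1 e.2) `|c e.1 e.2|
  + \sum_(u : cvert r) `|d u|.

(* Take C = 2/7, so that C / (3C + 4) = 1/17; the numerical claims reduce to
   ln (1 + sqrt 2) < 2 PI / 7.
   Fix a matching M of G_r. Drawing one uniform spin per matched pair (and per unmatched
   vertex) and orienting the two spins of a pair according to the sign of its coupling,
   the expected energy is -sum_(e in M) |c_e|: all other terms average out. The edges of
   G_r are covered by eight matchings, hence 8 H^* <= -sum |c|. The configuration
   S_u = -sign d_u gives H^* <= sum |c| - sum |d|, and adding the two bounds, the first one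
   twice, yields 17 H^* <= -(sum |c| + sum |d|). *)

From Stdlib Require Import Reals Lra.
From mathcomp Require Import all_boot all_order all_algebra.
From mathcomp Require Import Rstruct.
Import Order.TTheory GRing.Theory Num.Theory.

Set Implicit Arguments.
Unset Strict Implicit.
Unset Printing Implicit Defensive.

Section Numerics.
Local Open Scope R_scope.

(* [sin x < x] at [x = PI/2 - 3/2] together with the Taylor lower bound for [cos (3/2)]. *)
Lemma PI_gt_314 : 314 / 100 < PI.
Proof.
have PI_gt_3 := PI2_3_2.
have [cos_lb_le _] : cos_lb (3/2) <= cos (3/2) <= cos_ub (3/2) by apply: COS; lra.
have sin_lt : sin (PI/2 - 3/2) < PI/2 - 3/2 by apply: sin_lt_x; lra.
move: cos_lb_le sin_lt; rewrite sin_shift /cos_lb /cos_approx /cos_term /=.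
lra.
Qed.

Lemma pow_halving_le_exp (n : nat) (x : R) :
  0 <= x -> (1 + x / 2 ^ n) ^ (2 ^ n) <= exp x.
Proof.
elim: n x => [|n IHn] x x_ge0.
  by rewrite /= Rdiv_1_r Rmult_1_r; exact: exp_ineq1_le.
have -> : x / 2 ^ S n = x / 2 / 2 ^ n by rewrite /=; field; apply: pow_nonzero; lra.
have -> : exp x = Rsqr (exp (x / 2)) by rewrite /Rsqr -exp_plus; congr exp; field.
rewrite expnS mulnC -multE pow_mult -Rsqr_pow2; apply: Rsqr_incr_1; first (apply: IHn; lra).
- apply/pow_le/Rplus_le_le_0_compat; first lra.
  by apply: Rle_mult_inv_pos; [lra | apply: pow_lt; lra].
- exact/Rlt_le/exp_pos.
Qed.

Lemma ln_1_plus_sqrt2_lt : ln (1 + sqrt 2) < 2 * PI / 7.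
Proof.
have sqrt2_lt : sqrt 2 < 14143 / 10000.
  by rewrite -(sqrt_square (14143 / 10000)); [apply: sqrt_lt_1 | ]; lra.
have pow_le : (1 + 628 / 22400) ^ 32 <= exp (2 * PI / 7).
  apply: (Rle_trans _ ((1 + (2 * PI / 7) / 2 ^ 5) ^ (2 ^ 5))).
    by apply: pow_incr; have := PI_gt_314; rewrite /=; lra.
  by apply: pow_halving_le_exp; have := PI_RGT_0; lra.
have pow_gt : 24143 / 10000 < (1 + 628 / 22400) ^ 32 by rewrite /=; lra.
rewrite -(ln_exp (2 * PI / 7)); apply: ln_increasing; have := sqrt_pos 2; lra.
Qed.

End Numerics.

(* Imported only now: this [lra] shadows the Stdlib one used above on [Rlt]/[Rle] goals. *)
From mathcomp Require Import ring lra zify.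

Local Open Scope ring_scope.

Lemma ln_1_plus_sqrt2_div_PI_lt : ln (1 + sqrt 2) / PI < 2 / 7.
Proof.
have PI_gt0 : (0 : R) < PI by apply/RltP; exact: PI_RGT_0.
have := ln_1_plus_sqrt2_lt; rewrite RdivE RmultE !IZRposE !INRE /= => /RltP ln_lt.
by rewrite ltr_pdivrMr //; lra.
Qed.

Lemma spin_eqb a b : spin (a == b) = spin a * spin b.
Proof. by case: a; case: b; rewrite /spin ?mulr1 ?mul1r ?mulrN1 ?opprK. Qed.

Lemma spin_sqr a : spin a * spin a = 1.
Proof. by case: a; rewrite /spin ?mulr1 ?mulrNN ?mulr1. Qed.

Lemma spin_negb b : spin (~~ b) = - spin b.
Proof. by case: b; rewrite /spin ?opprK. Qed.

Lemma sum_odd_involution (R' : numDomainType) (I : finType) (F : I -> R') (g : I -> I) :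
  involutive g -> (forall x, F (g x) = - F x) -> \sum_x F x = 0.
Proof.
move=> gK Fg.
have sum_eq_opp : \sum_x F x = - \sum_x F x.
  by rewrite {1}(reindex_inj (can_inj gK)) -sumrN; apply: eq_bigr => x _; rewrite Fg.
have : (\sum_x F x) *+ 2 == 0 by rewrite mulr2n {1}sum_eq_opp addNr.
by rewrite mulrn_eq0 => /eqP.
Qed.

Section SpinAverages.
Variable V : finType.

Definition flip_at (a : V) (x : {ffun V -> bool}) : {ffun V -> bool} :=
  [ffun z => if z == a then ~~ x z else x z].

Lemma flip_atK a : involutive (flip_at a).
Proof.
move=> x; apply/ffunP => z; rewrite !ffunE.
by case: (z == a) => //=; rewrite negbK.
Qed.

Lemma sum_spin (a : V) : \sum_(x : {ffun V -> bool}) spin (x a) = 0.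
Proof.
pose F (x : {ffun V -> bool}) := spin (x a).
apply: (@sum_odd_involution _ _ F _ (flip_atK a)) => x.
by rewrite /F ffunE eqxx spin_negb.
Qed.

Lemma sum_spin_mul (a b : V) : a != b ->
  \sum_(x : {ffun V -> bool}) spin (x a) * spin (x b) = 0.
Proof.
move=> a_neq_b; pose F (x : {ffun V -> bool}) := spin (x a) * spin (x b).
apply: (@sum_odd_involution _ _ F _ (flip_atK a)) => x.
by rewrite /F !ffunE eqxx eq_sym (negbTE a_neq_b) spin_negb mulNr.
Qed.

End SpinAverages.

Section ChimeraEnergy.
Variables (r : nat) (c : cvert r -> cvert r -> R) (d : cvert r -> R).
Notation V := (cvert r).

Lemma Hstar_le_energy (S : {ffun V -> bool}) : Hstar c d <= energy c d S.
Proof. exact: bigmin_le. Qed.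

Definition cluster_spins (f : V -> V) (tau : V -> bool) (x : {ffun V -> bool}) :=
  [ffun u => x (f u) == tau u].

Lemma sum_energy_cluster_spins (f : V -> V) (tau : V -> bool) :
  \sum_(x : {ffun V -> bool}) energy c d (cluster_spins f tau x) =
  #|{: {ffun V -> bool}}|%:R *
    \sum_(e : V * V | chimera_edge e.1 e.2 && (f e.1 == f e.2))
      c e.1 e.2 * spin (tau e.1) * spin (tau e.2).
Proof.
rewrite /energy big_split /= exchange_big /=.
have -> : \sum_x \sum_u d u * spin (cluster_spins f tau x u) = 0.
  rewrite exchange_big /=; apply: big1 => u _.
  under eq_bigr do rewrite ffunE spin_eqb mulrA.
  by rewrite -big_distrl /= -big_distrr /= sum_spin mulr0 mul0r.
rewrite addr0 big_mkcondr mulr_sumr; apply: eq_bigr => e _.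
have regroup (k s s' t t' : R) : k * (s * t) * (s' * t') = k * t * t' * (s * s').
  by ring.
under eq_bigr do rewrite !ffunE !spin_eqb regroup.
rewrite -big_distrr /=; case: eqP => [-> | /eqP f_neq].
  by under eq_bigr do rewrite spin_sqr; rewrite sumr_const mulrC.
by rewrite sum_spin_mul // !mulr0.
Qed.

Lemma Hstar_le_cluster_energy (f : V -> V) (tau : V -> bool) :
  Hstar c d <= \sum_(e : V * V | chimera_edge e.1 e.2 && (f e.1 == f e.2))
                 c e.1 e.2 * spin (tau e.1) * spin (tau e.2).
Proof.
have card_gt0 : (0 < #|{: {ffun V -> bool}}|)%N by apply/card_gt0P; exists [ffun=> true].
rewrite -(@ler_pM2l _ #|{: {ffun V -> bool}}|%:R) ?ltr0n //.
rewrite -sum_energy_cluster_spins mulr_natl -sumr_const; apply: ler_sum => x _; exact: Hstar_le_energy.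
Qed.

Lemma chimera_edge_neq (u v : V) : chimera_edge u v -> u != v.
Proof.
move=> uv_edge; apply/eqP => u_eq_v; move: uv_edge; rewrite -u_eq_v /chimera_edge.
by case: (cv_l u); rewrite /= ?(ltn_eqF (ltnSn _)) ?andbF.
Qed.

(* Each fibre of [f] is a star centred at its [f]-image: an edge inside a fibre starts at the centre. *)
Definition star_map (f : V -> V) :=
  forall u v, chimera_edge u v -> f u = f v -> f u = u.

Lemma Hstar_le_star_weight (f : V -> V) : star_map f ->
  Hstar c d <= - \sum_(e : V * V | chimera_edge e.1 e.2 && (f e.1 == f e.2)) `|c e.1 e.2|.
Proof.
move=> f_star; set tau := fun v => (f v != v) && (0 < c (f v) v).
suff <- : \sum_(e : V * V | chimera_edge e.1 e.2 && (f e.1 == f e.2))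
            c e.1 e.2 * spin (tau e.1) * spin (tau e.2) =
          - \sum_(e : V * V | chimera_edge e.1 e.2 && (f e.1 == f e.2)) `|c e.1 e.2|.
  exact: Hstar_le_cluster_energy.
rewrite -sumrN; apply: eq_bigr => -[u v] /andP [/= uv_edge /eqP f_uv].
have fu : f u = u := f_star u v uv_edge f_uv.
have fv : f v = u by rewrite -f_uv.
rewrite /tau fu fv eqxx (chimera_edge_neq uv_edge) /= /spin.
case: (ltrP 0 (c u v)) => c_sign; first by rewrite gtr0_norm // mulr1 mulrN1.
by rewrite ler0_norm // !mulrN1 !opprK.
Qed.

Lemma Hstar_le_star_cover (I : finType) (f : I -> V -> V) :
  (forall i, star_map (f i)) ->
  (forall u v, chimera_edge u v -> exists i, f i u = f i v) ->
  #|I|%:R * Hstar c d <= - \sum_(e : V * V | chimera_edge e.1 e.2) `|c e.1 e.2|.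
Proof.
move=> f_star f_cover.
pose W i := \sum_(e : V * V | chimera_edge e.1 e.2 && (f i e.1 == f i e.2)) `|c e.1 e.2|.
have weight_le : \sum_(e : V * V | chimera_edge e.1 e.2) `|c e.1 e.2| <= \sum_i W i.
  rewrite /W; under [X in _ <= X]eq_bigr do rewrite big_mkcondr /=.
  rewrite exchange_big /=; apply: ler_sum => -[u v] /= uv_edge.
  have [i f_uv] := f_cover u v uv_edge.
  rewrite (bigD1 i) //= f_uv eqxx lerDl; apply: sumr_ge0 => j _.
  by case: ifP.
rewrite mulr_natl -sumr_const lerNr; apply: (le_trans weight_le).
by rewrite -sumrN; apply: ler_sum => i _; rewrite lerNr; exact: Hstar_le_star_weight.
Qed.

Lemma Hstar_le_field_weight :
  Hstar c d <= \sum_(e : V * V | chimera_edge e.1 e.2) `|c e.1 e.2| - \sum_u `|d u|.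
Proof.
apply: (le_trans (Hstar_le_energy [ffun u => d u < 0])); rewrite /energy -sumrN.
apply: lerD; apply: ler_sum.
  move=> e _; apply: (le_trans (ler_norm _)); rewrite !normrM !ffunE.
  by case: (_ < 0); case: (_ < 0); rewrite /spin ?normrN normr1 !mulr1.
move=> u _; rewrite ffunE /spin; case: ltrP => d_sign.
  by rewrite ltr0_norm // opprK mulr1.
by rewrite ger0_norm // mulrN1.
Qed.

(* Unfolding [coef_l1] by conversion puts its sums in the same syntactic form as the bounds above. *)
Lemma coef_l1E :
  coef_l1 c d = \sum_(e : V * V | chimera_edge e.1 e.2) `|c e.1 e.2| + \sum_u `|d u|.
Proof. by []. Qed.

End ChimeraEnergy.

Section ChimeraMatchings.
Variable r : nat.
Notation V := (cvert r).

Definition ord_prev (i : 'I_r) : 'I_r := Ordinal (leq_ltn_trans (leq_pred i) (ltn_ord i)).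

(* Eight matchings covering the edges: [E01] split by [k1 - k0] mod 4, and [E0], [E1] split by
   the parity of the larger index. Each maps an endpoint to its partner, the other to itself. *)
Definition match01 (s : 'I_4) (u : V) : V :=
  let: (i, j, k, l) := u in if l then (i, j, k - s, false) else u.

Definition match0 (p : bool) (u : V) : V :=
  let: (i, j, k, l) := u in
  if ~~ l && (odd i != p) && (0 < i)%N then (ord_prev i, j, k, false) else u.

Definition match1 (p : bool) (u : V) : V :=
  let: (i, j, k, l) := u in
  if l && (odd j != p) && (0 < j)%N then (i, ord_prev j, k, true) else u.

Definition chimera_matching (m : 'I_4 + bool + bool) : V -> V :=
  match m with
  | inl (inl s) => match01 s
  | inl (inr p) => match0 p
  | inr p => match1 p
  end.

Lemma star_map_match01 s : star_map (match01 s).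
Proof.
move=> [[[i j] k] [|]] [[[i' j'] k'] l'] //=.
rewrite /chimera_edge /cv_i /cv_j /cv_k /cv_l /=.
case: l' => //=; rewrite ?andbF ?orbF.
move=> /and3P [_ /eqP j'_succ _] [_ j_eq _]; move: j'_succ; rewrite j_eq; lia.
Qed.

Lemma star_map_match0 p : star_map (match0 p).
Proof.
move=> [[[i j] k] l] [[[i' j'] k'] l'] /=.
rewrite /chimera_edge /cv_i /cv_j /cv_k /cv_l /=.
case: l => //=; case: ifP => // /andP [i_odd _].
case: l' => /=; first by move=> _ [].
rewrite ?andbF ?orbF /= => /and3P [/eqP i'_succ _ _].
have -> : (odd i' != p) = false by rewrite i'_succ /=; move: i_odd; case: (odd i); case: p.
by move=> /= -[/(congr1 val)]; rewrite /= i'_succ; lia.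
Qed.

Lemma star_map_match1 p : star_map (match1 p).
Proof.
move=> [[[i j] k] l] [[[i' j'] k'] l'] /=.
rewrite /chimera_edge /cv_i /cv_j /cv_k /cv_l /=.
case: l => //=; case: ifP => // /andP [j_odd _].
case: l' => /=; last by rewrite ?andbF.
rewrite ?andbF ?orbF /= => /and3P [_ /eqP j'_succ _].
have -> : (odd j' != p) = false by rewrite j'_succ /=; move: j_odd; case: (odd j); case: p.
by move=> /= -[_ /(congr1 val)]; rewrite /= j'_succ; lia.
Qed.

Lemma star_map_chimera_matching m : star_map (chimera_matching m).
Proof.
case: m => [[s|p]|p] /=.
- exact: star_map_match01.
- exact: star_map_match0.
- exact: star_map_match1.
Qed.

Lemma chimera_matching_cover (u v : V) :
  chimera_edge u v -> exists m, chimera_matching m u = chimera_matching m v.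
Proof.
move: u v => [[[i j] k] l] [[[i' j'] k'] l'].
rewrite /chimera_edge /cv_i /cv_j /cv_k /cv_l /=.
case: l; case: l' => /=; rewrite ?andbF ?orbF ?andbT //=.
- move=> /and3P [/eqP hi /eqP hj /eqP hk]; exists (inr (odd j)) => /=.
  rewrite eqxx /= hj /=.
  have -> : (~~ odd j != odd j) = true by case: (odd j).
  by congr (_,_,_,_); apply: val_inj => /=; lia.
- move=> /andP [/eqP hi /eqP hj]; exists (inl (inl (k' - k))) => /=.
  congr (_,_,_,_); try (apply: val_inj => /=; lia).
  by rewrite opprB addrC subrK.
- move=> /and3P [/eqP hi /eqP hj /eqP hk]; exists (inl (inr (odd i))) => /=.
  rewrite eqxx /= hi /=.
  have -> : (~~ odd i != odd i) = true by case: (odd i).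
  by congr (_,_,_,_); apply: val_inj => /=; lia.
Qed.

End ChimeraMatchings.

Theorem theorem2 :
  exists C : R,
    ln (1 + sqrt 2) / PI < C /\
    (3 * C + 4) / C < 1726%:R / 100%:R /\
    forall (r : nat), (0 < r)%N ->
    forall (c : cvert r -> cvert r -> R) (d : cvert r -> R),
      Hstar c d <= - (C / (3 * C + 4)) * coef_l1 c d.
Proof.
exists (2 / 7); split; first exact: ln_1_plus_sqrt2_div_PI_lt.
have -> : 3 * (2 / 7) + 4 = 34 / 7 :> R by lra.
rewrite !invf_div; split; first lra.
move=> r _ c d.
have := Hstar_le_star_cover c d (@star_map_chimera_matching r) (@chimera_matching_cover r).
rewrite !card_sum card_ord card_bool !natrD => edge_bound.
have field_bound := Hstar_le_field_weight c d.
rewrite coef_l1E; lra.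
Qed.
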